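(* Every $f\in\operatorname{NDPF}^{(1)}_N$ is entirely determined by its set of fibers, its set of images, and the single value $f(i)$ for one $i\in\mathbb{Z}$.
   Context: $\operatorname{NDPF}^{(1)}_N$ is the set of functions $f:\mathbb{Z}\to\mathbb{Z}$ that are regressive ($f(i)\le i$), order preserving ($i\le j\Rightarrow f(i)\le f(j)$) and skew periodic ($f(i+N)=f(i)+N$), excluding the shift functions $i\mapsto i-t$ with $t\ne0$. The fibers of $f$ are the nonempty sets $f^{-1}(a)$, $a\in\mathbb{Z}$. *)

From Stdlib Require Import ZArith.
Open Scope Z_scope.

Definition regressive (f : Z -> Z) : Prop := forall i, f i <= i.
Definition order_preserving (f : Z -> Z) : Prop := forall i j, i <= j -> f i <= f j.
Definition skew_periodic (N : Z) (f : Z -> Z) : Prop := forall i, f (i + N) = f i + N.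
Definition is_shift (f : Z -> Z) (t : Z) : Prop := forall i, f i = i - t.

Definition NDPF1 (N : Z) (f : Z -> Z) : Prop :=
  regressive f /\ order_preserving f /\ skew_periodic N f /\
  ~ (exists t, t <> 0 /\ is_shift f t).

Definition is_fiber (f : Z -> Z) (S : Z -> Prop) : Prop :=
  exists a, (exists x, f x = a) /\ (forall x, S x <-> f x = a).

Definition in_image (f : Z -> Z) (y : Z) : Prop := exists x, f x = y.

From Stdlib Require Import ZArith Lia.
Open Scope Z_scope.

(* Only monotonicity matters.  Equal fibers give [f] and [g] the same kernel,
   so for order-preserving maps [f x < f y <-> g x < g y]: [g] is [f] followed
   by a strictly increasing bijection of the common image onto itself.  Such a
   bijection fixing the point [f i] is the identity: a point of the image
   below [f i] that is moved up would force another moved point strictly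
   closer to [f i], and descent on the distance to [f i] rules this out. *)

Definition order_equivalent (f g : Z -> Z) : Prop :=
  forall x y, f x < f y <-> g x < g y.

Lemma same_fibers_same_kernel (f g : Z -> Z) :
  (forall S : Z -> Prop, is_fiber f S <-> is_fiber g S) ->
  forall x y, f x = f y -> g x = g y.
Proof.
  intros Hfib x y Hxy.
  assert (Hfiber : is_fiber f (fun t => f t = f x)).
  { exists (f x); split; [now exists x | tauto]. }
  destruct (proj1 (Hfib _) Hfiber) as [a [_ Ha]].
  assert (g x = a) by (apply Ha; reflexivity).
  assert (g y = a) by (apply Ha; congruence).
  congruence.
Qed.

Lemma order_preserving_lt_of_kernel (f g : Z -> Z) :
  order_preserving f -> order_preserving g ->
  (forall x y, g x = g y -> f x = f y) ->
  forall x y, f x < f y -> g x < g y.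
Proof.
  intros Hf Hg Hker x y Hlt.
  assert (x < y).
  { destruct (Z_lt_le_dec x y) as [|Hyx]; [assumption|].
    pose proof (Hf y x Hyx); lia. }
  pose proof (Hg x y ltac:(lia)).
  destruct (Z.eq_dec (g x) (g y)) as [Heq|]; [apply Hker in Heq; lia | lia].
Qed.

Lemma order_equivalent_sym (f g : Z -> Z) :
  order_equivalent f g -> order_equivalent g f.
Proof. intros H x y; symmetry; apply H. Qed.

Lemma order_equivalent_opp (f g : Z -> Z) :
  order_equivalent f g -> order_equivalent (fun x => - f x) (fun x => - g x).
Proof. intros H x y; specialize (H y x); lia. Qed.

Lemma image_incl_opp (f g : Z -> Z) :
  (forall y, in_image g y -> in_image f y) ->
  forall y, in_image (fun x => - g x) y -> in_image (fun x => - f x) y.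
Proof.
  intros Hgf y [z Hz].
  destruct (Hgf (- y) ltac:(exists z; lia)) as [x Hx].
  exists x; lia.
Qed.

Lemma order_equivalent_le_below (f g : Z -> Z) (i : Z) :
  order_equivalent f g ->
  (forall y, in_image g y -> in_image f y) ->
  f i = g i ->
  forall x, f x < f i -> g x <= f x.
Proof.
  intros Hord Him Hi.
  enough (Hdist : forall d, 0 <= d -> forall x, f i - f x = d -> f x < f i -> g x <= f x)
    by (intros x Hx; apply (Hdist (f i - f x)); lia).
  apply (Z_lt_induction (fun d => forall x, f i - f x = d -> f x < f i -> g x <= f x)).
  intros d IH x Hd Hx.
  destruct (Z_le_gt_dec (g x) (f x)) as [|Hup]; [assumption | exfalso].
  (* [g x] is a value [f z] strictly between [f x] and [f i], and [z] is moved up too. *)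
  destruct (Him (g x) ltac:(now exists x)) as [z Hz].
  assert (g x < g z) by (apply Hord; lia).
  assert (g x < g i) by (apply Hord; exact Hx).
  assert (g z <= f z) by (apply (IH (f i - f z)); lia).
  lia.
Qed.

Lemma order_equivalent_le_above (f g : Z -> Z) (i : Z) :
  order_equivalent f g ->
  (forall y, in_image g y -> in_image f y) ->
  f i = g i ->
  forall x, f i < f x -> f x <= g x.
Proof.
  intros Hord Him Hi x Hx.
  enough (- g x <= - f x) by lia.
  apply (order_equivalent_le_below (fun x => - f x) (fun x => - g x) i);
    cbn; [apply order_equivalent_opp, Hord | apply image_incl_opp, Him | lia | lia].
Qed.

Lemma order_equivalent_image_fix_eq (f g : Z -> Z) (i : Z) :
  order_equivalent f g ->
  (forall y, in_image f y <-> in_image g y) ->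
  f i = g i ->
  forall x, f x = g x.
Proof.
  intros Hord Him Hi x.
  assert (Hord' := order_equivalent_sym f g Hord).
  assert (Hgf : forall y, in_image g y -> in_image f y) by (intro; apply Him).
  assert (Hfg : forall y, in_image f y -> in_image g y) by (intro; apply Him).
  pose proof (Hord x i); pose proof (Hord i x).
  destruct (Z.lt_total (f x) (f i)) as [Hlt | [Heq | Hgt]].
  - pose proof (order_equivalent_le_below f g i Hord Hgf Hi x Hlt).
    pose proof (order_equivalent_le_below g f i Hord' Hfg (eq_sym Hi) x ltac:(lia)).
    lia.
  - lia.
  - pose proof (order_equivalent_le_above f g i Hord Hgf Hi x Hgt).
    pose proof (order_equivalent_le_above g f i Hord' Hfg (eq_sym Hi) x ltac:(lia)).
    lia.
Qed.

Theorem mainTheorem8 (N : Z) (HN : 0 < N) (f g : Z -> Z) :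
  NDPF1 N f -> NDPF1 N g ->
  (forall S : Z -> Prop, is_fiber f S <-> is_fiber g S) ->
  (forall y : Z, in_image f y <-> in_image g y) ->
  forall i : Z, f i = g i ->
  forall x : Z, f x = g x.
Proof.
  intros [_ [Hf _]] [_ [Hg _]] Hfib Him i Hi.
  assert (Hkerfg := same_fibers_same_kernel f g Hfib).
  assert (Hkergf : forall x y, g x = g y -> f x = f y).
  { apply same_fibers_same_kernel; intro S; symmetry; apply Hfib. }
  apply (order_equivalent_image_fix_eq f g i); [|exact Him|exact Hi].
  intros x y; split.
  - apply (order_preserving_lt_of_kernel f g Hf Hg Hkergf).
  - apply (order_preserving_lt_of_kernel g f Hg Hf Hkerfg).
Qed.
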